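(* Consider $n$ processes running the Median-based Byzantine Agreement algorithm (described in the context) with parameter $\alpha$, where $\alpha < \lceil n/6 \rceil - 1$, in a system with fewer than $\lfloor n/3 \rfloor$ Byzantine processes and fewer than $\alpha$ processes subject to malicious transient faults. Then (consistency) all non-faulty processes output the same value $d$, and (interval validity) $d \in \{\min T,\dots,\max T\}$, where $T$ is the multiset of inputs of the non-faulty processes.
   Context: System model: $n$ processes $p_1,\dots,p_n$ communicate over a complete network in fully synchronous rounds (every message sent in a round is delivered before the next round); the receiver of a message knows its sender. A Byzantine process may deviate arbitrarily from the protocol, e.g. send different messages to different processes or omit messages. A malicious transient fault at a non-Byzantine process replaces its value (input) by an arbitrary, possibly adversarially chosen value (possibly $\bot$) at the start of the execution; afterwards the process follows the algorithm (so it sends the same value to everyone). A process is non-faulty if it is neither Byzantine nor subject to a transient fault. Each process $p_i$ has an input value $v_i$ from a totally ordered domain $V$ (integers); $\bot\notin V$ is a special default value. WeakMVBA: a Byzantine agreement protocol (tolerating the given number of Byzantine processes) in which each process has an input and all non-faulty processes terminate with: (consistency) the same decision value; (weak validity) if all non-faulty processes have the same input $v$, the decision is $v$; otherwise the decision is some value of $V\cup\{\bot\}$. Median-based Byzantine Agreement algorithm with parameter $\alpha \ge 0$, run by a process with input $v$: (1) send $v$ to all processes (including itself); initialize an array $A[1..n]$ to $\bot$ and set $A[i]$ to the value received from $p_i$. (2) For each $i=1,\dots,n$, in parallel, run an instance of WeakMVBA in which this process uses input $A[i]$, and replace $A[i]$ by the decision of that instance. (3) Output select\_value$(A)$, defined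 as: delete all $\bot$ entries of $A$ to obtain a list $A_{\not\bot}$ of length $k$; let $C[u]$ be the number of occurrences of $u$ in $A_{\not\bot}$ and let $m$ be a value maximizing $C[m]$ (ties broken by a fixed deterministic rule); if $C[m] \ge \lfloor k/3\rfloor + 1 + \alpha$, output $m$; otherwise sort $A_{\not\bot}$ in nondecreasing order and output its median element (the entry at position $\lfloor k/2 \rfloor$; for even $k$ the lower of the two middle values). *)

From mathcomp Require Import all_boot all_order all_algebra.
Set Implicit Arguments. Unset Strict Implicit. Unset Printing Implicit Defensive.
Import Order.TTheory GRing.Theory Num.Theory.
Local Open Scope ring_scope.

(* Values are integers; [None] plays the role of the default value \bot. *)

Definition mode_rule (pick : seq int -> int) : Prop :=
  forall L : seq int, L != [::] ->
    pick L \in L /\ forall u : int, (count_mem u L <= count_mem (pick L) L)%N.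

Definition select_value (pick : seq int -> int) (alpha : nat)
    (A : seq (option int)) : option int :=
  let L := pmap id A in
  let k := size L in
  if k == 0%N then None else
  let m := pick L in
  if (k %/ 3 + 1 + alpha <= count_mem m L)%N then Some m
  else Some (nth 0 (sort (fun x y : int => x <= y) L) (k.-1)./2).
  (* lower median: 0-based index floor((k-1)/2) of the sorted list *)

From mathcomp Require Import all_boot all_order all_algebra.
From mathcomp Require Import zify.

Set Implicit Arguments.
Unset Strict Implicit.
Unset Printing Implicit Defensive.

Import Order.TTheory GRing.Theory Num.Theory.
Local Open Scope ring_scope.

(* For a non-faulty j, every non-faulty process puts v_j in A[j], so by weak
   validity the j-th WeakMVBA instance decides v_j, and by consistency all
   non-faulty processes end with the same array, hence the same output.
   Fewer than n/3 + alpha entries of that array come from faulty processes,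
   while the non-faulty entries form a strict majority of the non-bottom ones.
   So a value reaching the frequency threshold occurs at some non-faulty
   process, and the lower median has more entries than the faulty ones on
   each side: it lies between two non-faulty inputs. *)

Section SortedCount.
Variables (disp : Order.disp_t) (T : orderType disp) (x0 : T) (s : seq T).
Hypothesis s_sorted : sorted <=%O s.

Lemma ltn_count_le_nth (t : nat) : (t < size s)%N ->
  (t < count (fun x => x <= nth x0 s t)%O s)%N.
Proof.
move=> t_lt; rewrite ltnNge; apply/negP => le_count.
by have := nth_count_gt x0 s_sorted (introT andP (conj le_count t_lt)); rewrite ltxx.
Qed.

Lemma leq_count_ge_nth (t : nat) :
  (size s - t <= count (fun x => nth x0 s t <= x)%O s)%N.
Proof.
have count_lt : (count (fun x => x < nth x0 s t)%O s <= t)%N.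
  rewrite leqNgt; apply/negP => /(nth_count_lt x0 s_sorted).
  by rewrite ltxx.
rewrite -(count_predC (fun x => x < nth x0 s t)%O s) leq_subLR leq_add //.
by apply/eq_leq/eq_count => x; rewrite /= leNgt.
Qed.

End SortedCount.

Section DecisionVector.
Variables (I : eqType) (T : Type) (good : pred I) (a : I -> option T) (v : I -> T).
Hypothesis a_good : forall j, good j -> a j = Some (v j).

Local Notation values s := (pmap id (map a s)).

Lemma count_good_le_size_values (s : seq I) : (count good s <= size (values s))%N.
Proof.
rewrite size_pmap count_map; apply: sub_count => j /= gj.
by rewrite a_good.
Qed.

Lemma count_values_le (P : pred T) (s : seq I) :
  (count P (values s) + count good s
     <= count (fun j => good j && P (v j)) s + size (values s))%N.
Proof.
elim: s => [|j s IH] //=; case gj: (good j) => /=.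
  by rewrite a_good //=; lia.
by case: (a j) => [x|] /=; lia.
Qed.

Lemma exists_good_witness (P : pred T) (s : seq I) :
  (size (values s) - count good s < count P (values s))%N ->
  exists2 j, good j & P (v j).
Proof.
move=> many.
have : (0 < count (fun j => good j && P (v j)) s)%N.
  by have := count_values_le P s; have := count_good_le_size_values s; lia.
by rewrite -has_count => /hasP [j _ /andP [gj Pj]]; exists j.
Qed.

End DecisionVector.

Lemma excess_below_thresholds (g e k alpha : nat) :
  (e <= (g + e) %/ 3 + alpha)%N -> (2 * e < g + e)%N -> (g <= k <= g + e)%N ->
  [/\ (0 < k)%N, (k - g < k %/ 3 + 1 + alpha)%N, ((k.-1)./2 < k)%N,
      (k - g < (k.-1)./2.+1)%N & (k - g < k - (k.-1)./2)%N].
Proof. by rewrite -divn2; split; lia. Qed.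

Lemma select_value_good_range (I : eqType) (good : pred I)
    (a : I -> option int) (v : I -> int) (pick : seq int -> int) (alpha : nat)
    (s : seq I) :
  (forall j, good j -> a j = Some (v j)) ->
  (count (predC good) s <= size s %/ 3 + alpha)%N ->
  (2 * count (predC good) s < size s)%N ->
  exists d, select_value pick alpha (map a s) = Some d /\
    (exists2 i, good i & v i <= d) /\ (exists2 i, good i & d <= v i).
Proof.
rewrite -(count_predC good s) => a_good e_le e_lt.
rewrite /select_value; set L := pmap id _.
have k_bounds : (count good s <= size L <= count good s + count (predC good) s)%N.
  rewrite (count_good_le_size_values a_good).
  by rewrite count_predC size_pmap count_map count_size.
have [k_pos mode_ok t_lt_k rank_ok corank_ok] :=
  excess_below_thresholds e_le e_lt k_bounds.
have witness P : (size L - count good s < count P L)%N -> exists2 j, good j & P (v j).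
  exact: (exists_good_witness a_good).
rewrite eqn0Ngt k_pos /=.
case: ifP => [frequent | _].
  have [j gj /eqP vj] : exists2 j, good j & pred1 (pick L) (v j).
    by apply: witness; apply: leq_trans frequent.
  by exists (pick L); split => //; split; exists j; rewrite // vj.
set sL := sort _ L; set t := (size L).-1./2; set d := nth 0 sL t.
have sL_sorted : sorted <=%O sL by rewrite /sL; apply: sort_sorted; exact: le_total.
have perm_sL : perm_eq sL L by rewrite /sL perm_sort.
have size_sL : size sL = size L by rewrite size_sort.
exists d; split => //; split.
  apply: (witness (fun x => x <= d)); rewrite -(permP perm_sL).
  by apply: leq_trans (ltn_count_le_nth 0 sL_sorted _); rewrite ?size_sL.
apply: (witness (fun x => d <= x)); rewrite -(permP perm_sL).
by apply: leq_trans (leq_count_ge_nth 0 sL_sorted t); rewrite size_sL.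
Qed.

Lemma count_enum_card (T : finType) (A : {pred T}) : count A (enum T) = #|A|.
Proof. by rewrite cardE -size_filter /enum_mem filter_predT. Qed.

Lemma resilience_bounds (n alpha b f g e : nat) :
  (b < n %/ 3)%N -> (f < alpha)%N -> (alpha < (n + 5) %/ 6 - 1)%N ->
  (e <= b + f)%N -> (g + e = n)%N ->
  [/\ (0 < g)%N, (e <= n %/ 3 + alpha)%N & (2 * e < n)%N].
Proof. by split; lia. Qed.

Theorem theorem2
  (n alpha : nat) (B F : {set 'I_n})
  (hBF : [disjoint B & F])
  (hB : (#|B| < n %/ 3)%N)
  (hF : (#|F| < alpha)%N)
  (halpha : (alpha < (n + 5) %/ 6 - 1)%N)
  (pick : seq int -> int) (hpick : mode_rule pick)
  (v : 'I_n -> int) (w : 'I_n -> option int)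
  (recv : 'I_n -> 'I_n -> option int)
  (dec : 'I_n -> 'I_n -> option int) :
  let nonfaulty (p : 'I_n) := (p \notin B) && (p \notin F) in
  let sent (j : 'I_n) := if j \in F then w j else Some (v j) in
  let A0 (p j : 'I_n) := if j \in B then recv p j else sent j in
  (* WeakMVBA consistency for every instance j *)
  (forall j p q, nonfaulty p -> nonfaulty q -> dec p j = dec q j) ->
  (* WeakMVBA weak validity for every instance j *)
  (forall j (x : int), (forall p, nonfaulty p -> A0 p j = Some x) ->
     forall p, nonfaulty p -> dec p j = Some x) ->
  let out (p : 'I_n) := select_value pick alpha [seq dec p j | j <- enum 'I_n] in
  exists d : int,
    (forall p, nonfaulty p -> out p = Some d) /\
    (exists2 i, nonfaulty i & v i <= d) /\
    (exists2 i, nonfaulty i & d <= v i).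
Proof.
move=> nonfaulty sent A0 agree valid out.
have dec_nonfaulty j : nonfaulty j -> forall p, nonfaulty p -> dec p j = Some (v j).
  move=> /andP [/negbTE jB /negbTE jF]; apply: valid => p _.
  by rewrite /A0 /sent jB jF.
have faulty_le : (count (predC nonfaulty) (enum 'I_n) <= #|B| + #|F|)%N.
  rewrite (@eq_count _ _ (mem (B :|: F))) ?count_enum_card ?leq_card_setU // => j.
  by rewrite /= inE negb_and !negbK.
have nonfaulty_faulty := count_predC nonfaulty (enum 'I_n).
rewrite size_enum_ord in nonfaulty_faulty.
have [nonfaulty_pos faulty_third faulty_minority] :=
  resilience_bounds hB hF halpha faulty_le nonfaulty_faulty.
have [p0 _ nonfaulty_p0] : exists2 p, p \in enum 'I_n & nonfaulty p.
  by apply/hasP; rewrite has_count.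
have [|||d [out_p0 range_d]] :=
  @select_value_good_range _ nonfaulty (dec p0) v pick alpha (enum 'I_n).
- by move=> j /dec_nonfaulty; apply.
- by rewrite size_enum_ord.
- by rewrite size_enum_ord.
exists d; split=> // p nonfaulty_p; rewrite -out_p0 /out.
by congr select_value; apply: eq_map => j; apply: agree.
Qed.
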